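(* Let $X$ and $Y$ be $n\times n$ Hermitian matrices whose Thompson metric $d=d_T(X,Y)$ is finite, and let $1\le p\le\infty$. Then $$\|X-Y\|_p\;\le\;2^{\frac1p}\,\frac{e^d-1}{e^d}\,\max\big[\|X\|_p,\|Y\|_p\big].$$
   Context: For Hermitian matrices $A,B$, write $A\le B$ (Löwner order) if $B-A$ is positive semidefinite. The Thompson metric of Hermitian matrices $X,Y$ is $d_T(X,Y)=\inf\{\log\alpha:\ \alpha\ge 1,\ X\le\alpha Y,\ Y\le \alpha X\}$, with $d_T(X,Y)=+\infty$ if no such $\alpha$ exists. For positive semidefinite $X,Y$ this is the usual $\log\max\{M(X/Y),M(Y/X)\}$, where $M(X/Y)=\inf\{\lambda>0: X\le\lambda Y\}$. For a Hermitian matrix $M$ with eigenvalues $\mu_1\ge\dots\ge\mu_n$, the Schatten $p$-norm is $\|M\|_p=(\sum_{i=1}^n|\mu_i|^p)^{1/p}$ for $1\le p<\infty$. For $p=\infty$ it is $\max_i|\mu_i|$ (the spectral norm), and $2^{1/\infty}=1$. *)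

From HB Require Import structures.
From mathcomp Require Import all_boot all_order all_algebra.
From mathcomp Require Import complex.
From mathcomp Require Import classical_sets boolp reals constructive_ereal ereal.
From mathcomp Require Import sequences exp.
Set Implicit Arguments. Unset Strict Implicit. Unset Printing Implicit Defensive.
Import Order.TTheory GRing.Theory Num.Theory.
Local Open Scope ring_scope.

Section Defs.
Variable R : realType.
Local Notation C := (complex R).

Definition adjmx m n (M : 'M[C]_(m, n)) : 'M[C]_(n, m) := (map_mx Num.conj M)^T.

(* Positive semidefinite: v A v^* >= 0 (i.e. real and nonnegative) for all v. *)
Definition psdmx n (A : 'M[C]_n) : Prop :=
  forall v : 'rV[C]_n, 0 <= (v *m A *m adjmx v) 0 0.

Definition loewner n (A B : 'M[C]_n) : Prop := psdmx (B - A).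

Definition thompson_set n (X Y : 'M[C]_n) : set R :=
  [set a | 1 <= a /\ loewner X ((a%:C)%C *: Y) /\ loewner Y ((a%:C)%C *: X)].

(* d_T(X,Y) = inf { log alpha : alpha in thompson_set }, = +oo if empty. *)
Definition thompson n (X Y : 'M[C]_n) : \bar R :=
  ereal_inf [set (ln a)%:E | a in thompson_set X Y]%classic.

(* Eigenvalues (with multiplicity) of a Hermitian (hence normal) matrix:
   the diagonal of its spectral decomposition A = P^-1 diag(mu) P. *)
Definition eigvals n (A : 'M[C]_n) : 'rV[C]_n := spectral_diag A.

(* Modulus |z| of a complex number, as an element of R (|z| is real). *)
Definition cabs (z : C) : R := complex.Re `|z|.

(* Schatten p-norm, 1 <= p <= +oo (value at other p irrelevant). *)
Definition schatten (p : \bar R) n (M : 'M[C]_n) : R :=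
  match p with
  | r%:E => powR (\sum_(i < n) powR (cabs (eigvals M 0 i)) r) r^-1
  | +oo%E => \big[Num.max/0]_(i < n) cabs (eigvals M 0 i)
  | -oo%E => 0
  end.

Definition two_pow_inv (p : \bar R) : R :=
  match p with
  | r%:E => powR 2 r^-1
  | _ => 1
  end.

End Defs.

(* Fix a >= 1 with X <= a Y and Y <= a X; let l_i be the eigenvalues of X - Y, with
   orthonormal eigenvectors u_i, and x_j, y_j those of X and Y.  Expanding
   u_i X u_i^* and u_i Y u_i^* in eigenbases of X and Y produces weights forming
   doubly stochastic matrices W, W' (squared moduli of unitary matrices), and the
   Loewner inequalities give
     l_i <= (1 - 1/a) u_i X u_i^* = sum_j W_ij (1 - 1/a) x_j,
     -l_i <= sum_j W'_ij (1 - 1/a) y_j,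
   with nonnegative right-hand terms since X <= a^2 X and Y <= a^2 Y.  Jensen's
   inequality for t |-> t^p then gives
   sum_i |l_i|^p <= (1 - 1/a)^p (||X||_p^p + ||Y||_p^p), and for p = oo the bound
   is immediate.  Letting ln a decrease to d turns 1 - 1/a into 1 - e^-d. *)

From HB Require Import structures.
From mathcomp Require Import all_boot all_order all_algebra.
From mathcomp Require Import complex.
From mathcomp Require Import classical_sets boolp reals constructive_ereal ereal.
From mathcomp Require Import sequences exp convex hoelder.
From mathcomp Require Import ring lra.
Set Implicit Arguments. Unset Strict Implicit. Unset Printing Implicit Defensive.
Import Order.TTheory GRing.Theory Num.Theory.
Local Open Scope ring_scope.

Section Stochastic.
Variable R : realType.

Lemma powR_convex2 (r t x y : R) : 1 <= r -> 0 <= t <= 1 -> 0 <= x -> 0 <= y ->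
  powR (t * x + (1 - t) * y) r <= t * powR x r + (1 - t) * powR y r.
Proof.
move=> r1 /andP[t0 t1] x0 y0.
have mem z : 0 <= z -> z \in (`[0, +oo[%classic : set R).
  by rewrite inE /= in_itv /= andbT.
have := @convex_powR R r r1 (Itv01 (eqbRL t0 isT) (eqbRL t1 isT)) x y (mem x x0) (mem y y0).
by rewrite !convRE.
Qed.

Lemma jensen_powR (r : R) n (m a : 'I_n -> R) : 1 <= r ->
  (forall j, 0 <= m j) -> (forall j, 0 <= a j) -> \sum_j m j = 1 ->
  powR (\sum_j m j * a j) r <= \sum_j m j * powR (a j) r.
Proof.
move=> r1; elim: n m a => [|n IH] m a m0 a0.
  by rewrite big_ord0 => /esym/eqP; rewrite oner_eq0.
rewrite !big_ord_recr /=; set s := \sum_(i < n) _ => sm1.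
have mn : m ord_max = 1 - s by rewrite -sm1 [s + _]addrC addrK.
have s0 : 0 <= s by apply: sumr_ge0.
have [s_eq0|s_neq0] := eqVneq s 0.
  have mw0 (i : 'I_n) : m (widen_ord (leqnSn n) i) = 0.
    by apply: (psumr_eq0P (fun i _ => m0 _) s_eq0).
  have sum0 (F : 'I_n -> R) : \sum_i m (widen_ord (leqnSn n) i) * F i = 0.
    by rewrite big1 // => i _; rewrite mw0 mul0r.
  by rewrite !sum0 !add0r mn s_eq0 subr0 !mul1r.
pose m' i := m (widen_ord (leqnSn n) i) / s.
have m'1 : \sum_i m' i = 1 by rewrite -mulr_suml divff.
have m'0 i : 0 <= m' i by rewrite divr_ge0.
have IHn := IH m' (fun i => a (widen_ord (leqnSn n) i)) m'0 (fun i => a0 _) m'1.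
have ms (F : 'I_n -> R) : \sum_i m (widen_ord (leqnSn n) i) * F i = s * \sum_i m' i * F i.
  by rewrite mulr_sumr; apply: eq_bigr => i _; rewrite /m' mulrA mulrCA divff // mulr1.
rewrite !ms mn.
have s1 : 0 <= s <= 1 by rewrite s0 -sm1 lerDl m0.
have mean_ge0 : 0 <= \sum_i m' i * a (widen_ord (leqnSn n) i).
  by apply: sumr_ge0 => i _; rewrite mulr_ge0.
by apply: le_trans (powR_convex2 r1 s1 mean_ge0 (a0 _)) _; rewrite lerD2r ler_wpM2l.
Qed.

Definition row_stochastic m n (M : 'M[R]_(m, n)) :=
  (forall i j, 0 <= M i j) /\ (forall i, \sum_j M i j = 1).

Definition doubly_stochastic n (M : 'M[R]_n) :=
  row_stochastic M /\ row_stochastic M^T.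

Lemma stochastic_le_bigmax m n (M : 'M[R]_(m, n)) (c : 'I_n -> R) i :
  row_stochastic M -> \sum_j M i j * c j <= \big[Num.max/0]_j c j.
Proof.
move=> [M0 M1]; rewrite -[leRHS]mul1r -(M1 i) mulr_suml.
by apply: ler_sum => j _; rewrite ler_wpM2l ?le_bigmax.
Qed.

Lemma sum_powR_stochastic_le (r : R) n (M : 'M[R]_n) (c : 'I_n -> R) :
  1 <= r -> doubly_stochastic M -> (forall j, 0 <= c j) ->
  \sum_i powR (\sum_j M i j * c j) r <= \sum_j powR (c j) r.
Proof.
move=> r1 [[M0 M1] [_ MT1]] c0.
apply: le_trans (ler_sum _ (fun i _ => jensen_powR r1 (M0 i) c0 (M1 i))) _.
rewrite exchange_big /=; apply: ler_sum => j _.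
have col1 : \sum_i M i j = 1 by rewrite -(MT1 j); apply: eq_bigr => i _; rewrite mxE.
by rewrite -mulr_suml col1 mul1r.
Qed.

End Stochastic.

Section VectorNorm.
Variable R : realType.

Definition pnorm (p : \bar R) n (v : 'I_n -> R) : R :=
  match p with
  | r%:E => powR (\sum_i powR `|v i| r) r^-1
  | +oo%E => \big[Num.max/0]_i `|v i|
  | -oo%E => 0
  end.

Lemma pnorm_ge0 p n (v : 'I_n -> R) : 0 <= pnorm p v.
Proof.
case: p => [r||] //=; first exact: powR_ge0.
by elim/big_ind: _ => //= x y x0 y0; rewrite le_max x0.
Qed.

Lemma pnormZ p n (c : R) (v : 'I_n -> R) : (1%:E <= p)%E -> 0 <= c ->
  pnorm p (fun i => c * v i) = c * pnorm p v.
Proof.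
move=> + c0; case: p => [r||] //=; [rewrite lee_fin => r1|move=> _].
  have r_neq0 : r != 0 by rewrite gt_eqF // (lt_le_trans _ r1).
  under eq_bigr do rewrite normrM (ger0_norm c0) powRM //.
  rewrite -mulr_sumr powRM ?powR_ge0 ?sumr_ge0 //.
  by rewrite -powRrM mulfV // powRr1.
under eq_bigr do rewrite normrM (ger0_norm c0).
by elim/big_rec2: _ => [|i x y _ ->]; rewrite ?mulr0 // maxr_pMr.
Qed.

Lemma powR_norm_le_add (r x u v : R) : 0 <= r -> 0 <= u -> 0 <= v ->
  x <= u -> - x <= v -> powR `|x| r <= powR u r + powR v r.
Proof.
move=> r0 u0 v0 xu xv; have [x0|x0] := leP 0 x.
  apply: le_trans (_ : _ <= powR u r) _; last by rewrite lerDl powR_ge0.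
  by apply: ge0_ler_powR; rewrite ?nnegrE ?normr_ge0 // ger0_norm.
apply: le_trans (_ : _ <= powR v r) _; last by rewrite lerDr powR_ge0.
by apply: ge0_ler_powR; rewrite ?nnegrE ?normr_ge0 // ltr0_norm.
Qed.

Lemma powR_add_le_max (r s t : R) : 0 < r -> 0 <= s -> 0 <= t ->
  powR (s + t) r^-1 <= powR 2 r^-1 * Num.max (powR s r^-1) (powR t r^-1).
Proof.
move=> r0; wlog st : s t / s <= t => [wlog_st s0 t0|s0 t0].
  by have [/wlog_st|/ltW/wlog_st] := leP s t; rewrite ?(addrC s) ?(maxC (powR s _)); apply.
have ri0 : 0 <= r^-1 by rewrite invr_ge0 ltW.
rewrite max_r; last exact: ge0_ler_powR.
rewrite -powRM //; apply: ge0_ler_powR; rewrite ?nnegrE ?addr_ge0 ?mulr_ge0 //.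
by rewrite mulr2n mulrDl mul1r lerD2r.
Qed.

Lemma norm_le_max (x u v : R) : x <= u -> - x <= v -> `|x| <= Num.max u v.
Proof.
move=> xu xv; rewrite ler_norml; apply/andP; split.
  by rewrite lerNl (le_trans xv) // le_max lexx orbT.
by rewrite le_max xu.
Qed.

Lemma pnorm_le_stochastic p n (lam a b : 'I_n -> R) (M N : 'M[R]_n) :
  (1%:E <= p)%E -> doubly_stochastic M -> doubly_stochastic N ->
  (forall j, 0 <= a j) -> (forall j, 0 <= b j) ->
  (forall i, lam i <= \sum_j M i j * a j) ->
  (forall i, - lam i <= \sum_j N i j * b j) ->
  pnorm p lam <= two_pow_inv p * Num.max (pnorm p a) (pnorm p b).
Proof.
move=> + Mst Nst a0 b0 lamM lamN.
case: p => [r||] //=; [rewrite lee_fin => r1|move=> _].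
  have r0 : 0 < r by rewrite (lt_le_trans _ r1).
  have Ma0 i : 0 <= \sum_j M i j * a j.
    by rewrite sumr_ge0 // => j _; rewrite mulr_ge0 ?Mst.1.1.
  have Nb0 i : 0 <= \sum_j N i j * b j.
    by rewrite sumr_ge0 // => j _; rewrite mulr_ge0 ?Nst.1.1.
  have sum_le : \sum_i powR `|lam i| r <= \sum_j powR `|a j| r + \sum_j powR `|b j| r.
    apply: le_trans (ler_sum _ (fun i _ =>
      powR_norm_le_add (ltW r0) (Ma0 i) (Nb0 i) (lamM i) (lamN i))) _.
    rewrite big_split /=; under [X in _ <= X + _]eq_bigr do rewrite ger0_norm //.
    under [X in _ <= _ + X]eq_bigr do rewrite ger0_norm //.
    by rewrite lerD // sum_powR_stochastic_le.
  have sum_ge0 (c : 'I_n -> R) : 0 <= \sum_j powR `|c j| r.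
    by apply: sumr_ge0 => j _; exact: powR_ge0.
  apply: le_trans (powR_add_le_max r0 (sum_ge0 a) (sum_ge0 b)).
  by apply: ge0_ler_powR; rewrite ?nnegrE ?invr_ge0 ?(ltW r0) ?addr_ge0.
rewrite mul1r; apply: bigmax_le => [|i _].
  by rewrite le_max; apply/orP; left; exact: (pnorm_ge0 +oo%E a).
under [X in _ <= Num.max X _]eq_bigr do rewrite ger0_norm //.
under [X in _ <= Num.max _ X]eq_bigr do rewrite ger0_norm //.
apply: le_trans (norm_le_max (lamM i) (lamN i)) _.
by rewrite ge_max !le_max (stochastic_le_bigmax _ _ Mst.1)
  (stochastic_le_bigmax _ _ Nst.1) orbT.
Qed.

End VectorNorm.

Section Hermitian.
Variable R : realType.
Local Notation C := R[i].
Local Open Scope sesquilinear_scope.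
Local Open Scope complex_scope.

Lemma adjmxE m n (A : 'M[C]_(m, n)) : adjmx A = A ^t*.
Proof. by rewrite /adjmx map_trmx. Qed.

Lemma cabsE (z : C) : (cabs z)%:C = `|z|.
Proof. by rewrite /cabs normc_def. Qed.

Lemma cabs_real (x : R) : cabs x%:C = `|x|.
Proof. by rewrite /cabs normc_def /= expr0n /= addr0 sqrtr_sqr. Qed.

Lemma cabs_sqrE (z : C) : (cabs z ^+ 2)%:C = z * z^*.
Proof. by rewrite -normCK -cabsE -rmorphXn. Qed.

Definition normsqmx m n (U : 'M[C]_(m, n)) : 'M[R]_(m, n) :=
  \matrix_(i, j) cabs (U i j) ^+ 2.

Lemma unitary_normsqmx_row_stochastic m n (U : 'M[C]_(m, n)) :
  U \is unitarymx -> row_stochastic (normsqmx U).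
Proof.
move=> /unitarymxP /matrixP UU1; split=> [i j|i]; first by rewrite mxE sqr_ge0.
apply: (@complexI R); rewrite rmorph1 rmorph_sum.
have := UU1 i i; rewrite !mxE eqxx mulr1n => <-.
by apply: eq_bigr => j _; rewrite !mxE; exact: cabs_sqrE.
Qed.

Lemma unitary_normsqmx_doubly_stochastic n (U : 'M[C]_n) :
  U \is unitarymx -> doubly_stochastic (normsqmx U).
Proof.
move=> U_unitary; split; first exact: unitary_normsqmx_row_stochastic.
have -> : (normsqmx U)^T = normsqmx U^T by apply/matrixP => i j; rewrite !mxE.
by apply: unitary_normsqmx_row_stochastic; rewrite trmx_unitary.
Qed.

Lemma hermsymmxB n (X Y : 'M[C]_n) :
  X \is hermsymmx -> Y \is hermsymmx -> X - Y \is hermsymmx.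
Proof.
move=> /is_hermitianmxP + /is_hermitianmxP; rewrite !expr0 !scale1r => hX hY.
by apply/is_hermitianmxP; rewrite expr0 scale1r linearB /= map_mxB -hX -hY.
Qed.

Definition eigR n (A : 'M[C]_n) j : R := complex.Re (spectral_diag A 0 j).

Lemma spectral_diag_hermitian n (A : 'M[C]_n) j : A \is hermsymmx ->
  spectral_diag A 0 j = (eigR A j)%:C.
Proof.
move=> /hermitian_spectral_diag_real /mxOverP /(_ 0 j) /RRe_real.
by rewrite /eigR => ->.
Qed.

Lemma schatten_hermitian p n (A : 'M[C]_n) : A \is hermsymmx ->
  schatten p A = pnorm p (eigR A).
Proof.
move=> hA; have cabs_eigvals i : cabs (eigvals A 0 i) = `|eigR A i|.
  by rewrite /eigvals spectral_diag_hermitian // cabs_real.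
rewrite /schatten /pnorm; case: p => [r||]; last by [].
  by under eq_bigr do rewrite cabs_eigvals.
by under eq_bigr do rewrite cabs_eigvals.
Qed.

Lemma hermitian_spectral_decomp n (A : 'M[C]_n) : A \is hermsymmx ->
  A = (spectralmx A)^t* *m diag_mx (spectral_diag A) *m spectralmx A.
Proof.
move=> /hermitian_normalmx /orthomx_spectralP {1}->.
by rewrite invmx_unitary ?spectral_unitarymx.
Qed.

Definition qform n (v : 'rV[C]_n) (A : 'M[C]_n) : C := (v *m A *m adjmx v) 0 0.

Lemma qformB n (v : 'rV[C]_n) (A B : 'M[C]_n) :
  qform v (A - B) = qform v A - qform v B.
Proof. by rewrite /qform mulmxBr mulmxBl !mxE. Qed.

Lemma qformZ n (v : 'rV[C]_n) (c : C) (A : 'M[C]_n) :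
  qform v (c *: A) = c * qform v A.
Proof. by rewrite /qform -scalemxAr -scalemxAl mxE. Qed.

Lemma loewner_qform n (v : 'rV[C]_n) (A B : 'M[C]_n) :
  loewner A B -> qform v A <= qform v B.
Proof. by move=> /(_ v); rewrite -/(qform v _) qformB subr_ge0. Qed.

Lemma qform_diag n (v : 'rV[C]_n) (U : 'M[C]_n) (d : 'rV[C]_n) :
  qform v (U^t* *m diag_mx d *m U) =
    \sum_j d 0 j * (cabs ((v *m U^t*) 0 j) ^+ 2)%:C.
Proof.
have UvE : U *m adjmx v = (v *m U^t*)^t*.
  by rewrite adjmxE trmx_mul map_mxM trmxCK.
rewrite /qform !mulmxA -[_ *m U *m adjmx v]mulmxA UvE mxE; apply: eq_bigr => j _.
rewrite mul_mx_diag cabs_sqrE !mxE mulrAC; exact: mulrC.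
Qed.

Definition rayleigh m n (V : 'M[C]_(m, n)) (A : 'M[C]_n) i : R :=
  \sum_j normsqmx (V *m (spectralmx A)^t*) i j * eigR A j.

Lemma qform_row_hermitian m n (V : 'M[C]_(m, n)) (A : 'M[C]_n) i :
  A \is hermsymmx -> qform (row i V) A = (rayleigh V A i)%:C.
Proof.
move=> hA; rewrite {1}(hermitian_spectral_decomp hA) qform_diag rmorph_sum.
apply: eq_bigr => j _; rewrite [RHS]rmorphM [normsqmx _ _ _]mxE -row_mul.
by rewrite spectral_diag_hermitian // mulrC [X in cabs X]mxE.
Qed.

Lemma rayleigh_spectralmx n (A : 'M[C]_n) i :
  rayleigh (spectralmx A) A i = eigR A i.
Proof.
rewrite /rayleigh; have /unitarymxP -> := spectral_unitarymx A.
rewrite (bigD1 i) // big1 => [|j ji]; rewrite !mxE.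
  by rewrite eqxx mulr1n /cabs normr1 expr1n mul1r; exact: addr0.
by rewrite eq_sym (negPf ji) mulr0n /cabs normr0 expr0n mul0r.
Qed.

Lemma eigR_subr n (X Y : 'M[C]_n) i : X \is hermsymmx -> Y \is hermsymmx ->
  let P := spectralmx (X - Y) in eigR (X - Y) i = rayleigh P X i - rayleigh P Y i.
Proof.
move=> hX hY P; apply: (@complexI R).
rewrite -[in LHS]rayleigh_spectralmx -qform_row_hermitian ?hermsymmxB //.
by rewrite qformB !qform_row_hermitian // -rmorphB.
Qed.

End Hermitian.

Section Thompson.
Variable R : realType.
Local Notation C := R[i].
Local Open Scope sesquilinear_scope.
Local Open Scope complex_scope.

Lemma subr_le_onem_inv (a x y : R) :
  1 <= a -> x <= a * y -> x - y <= (1 - a^-1) * x.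
Proof.
move=> a1 xy; have a_neq0 : a != 0 by rewrite gt_eqF // (lt_le_trans ltr01 a1).
have -> : (1 - a^-1) * x = x - y + (a * y - x) / a by field.
by rewrite lerDl divr_ge0 ?subr_ge0 // (le_trans ler01 a1).
Qed.

Lemma onem_inv_mul_ge0 (a x y : R) : 1 <= a -> x <= a * y -> y <= a * x ->
  0 <= (1 - a^-1) * x.
Proof.
move=> a1 xy yx; have a0 : 0 < a by rewrite (lt_le_trans ltr01 a1).
have -> : (1 - a^-1) * x = (a - 1) * x / a by field; rewrite gt_eqF.
rewrite divr_ge0 ?(ltW a0) //.
have : 0 <= (a - 1) * x * (a + 1) by nra.
by rewrite pmulr_lge0 // addr_gt0.
Qed.

Lemma normsqmx_spectral_doubly_stochastic n (A B : 'M[C]_n) :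
  doubly_stochastic (normsqmx (spectralmx A *m (spectralmx B)^t*)).
Proof.
apply/unitary_normsqmx_doubly_stochastic/mul_unitarymx; first exact: spectral_unitarymx.
by rewrite trmxC_unitary spectral_unitarymx.
Qed.

Lemma loewner_rayleigh m n (V : 'M[C]_(m, n)) (A B : 'M[C]_n) (a : R) i :
  A \is hermsymmx -> B \is hermsymmx -> loewner A (a%:C *: B) ->
  rayleigh V A i <= a * rayleigh V B i.
Proof.
move=> hA hB /(loewner_qform (row i V)).
by rewrite qformZ !qform_row_hermitian // -rmorphM lecR.
Qed.

Lemma thompson_eigR_ge0 n (X Y : 'M[C]_n) (a : R) j :
  X \is hermsymmx -> Y \is hermsymmx -> 1 <= a ->
  loewner X (a%:C *: Y) -> loewner Y (a%:C *: X) -> 0 <= (1 - a^-1) * eigR X j.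
Proof.
move=> hX hY a1 XY YX; rewrite -(rayleigh_spectralmx X j).
exact: onem_inv_mul_ge0 a1 (loewner_rayleigh _ _ hX hY XY)
  (loewner_rayleigh _ _ hY hX YX).
Qed.

Lemma rayleigh_subr_le m n (V : 'M[C]_(m, n)) (X Y : 'M[C]_n) (a : R) i :
  X \is hermsymmx -> Y \is hermsymmx -> 1 <= a -> loewner X (a%:C *: Y) ->
  rayleigh V X i - rayleigh V Y i <=
    \sum_j normsqmx (V *m (spectralmx X)^t*) i j * ((1 - a^-1) * eigR X j).
Proof.
move=> hX hY a1 XY.
apply: le_trans (subr_le_onem_inv a1 (loewner_rayleigh V i hX hY XY)) _.
by rewrite mulr_sumr; apply: ler_sum => j _; rewrite mulrCA.
Qed.

Lemma schatten_subr_le p n (X Y : 'M[C]_n) (a : R) :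
  X \is hermsymmx -> Y \is hermsymmx -> (1%:E <= p)%E -> 1 <= a ->
  loewner X (a%:C *: Y) -> loewner Y (a%:C *: X) ->
  schatten p (X - Y) <=
    two_pow_inv p * (1 - a^-1) * Num.max (schatten p X) (schatten p Y).
Proof.
move=> hX hY p1 a1 XY YX.
have b0 : 0 <= 1 - a^-1 by rewrite subr_ge0 invf_le1 // (lt_le_trans ltr01 a1).
rewrite !schatten_hermitian ?hermsymmxB // -mulrA maxr_pMr // -!pnormZ //.
apply: pnorm_le_stochastic (normsqmx_spectral_doubly_stochastic (X - Y) X)
  (normsqmx_spectral_doubly_stochastic (X - Y) Y) _ _ _ _ => // [j|j|i|i].
- exact: thompson_eigR_ge0 hX hY a1 XY YX.
- exact: thompson_eigR_ge0 hY hX a1 YX XY.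
- by rewrite eigR_subr //; apply: rayleigh_subr_le.
- by rewrite eigR_subr // opprB; apply: rayleigh_subr_le.
Qed.

End Thompson.

Lemma le_onem_expRN_ereal_inf (R : realType) (S : set R) (x K : R) :
  0 <= K -> (forall a, S a -> 1 <= a) ->
  (ereal_inf [set (ln a)%:E | a in S] < +oo)%E ->
  (forall a, S a -> x <= K * (1 - a^-1)) ->
  x <= K * (1 - expR (- fine (ereal_inf [set (ln a)%:E | a in S]))).
Proof.
move=> K0 S1 Sfin xK; set T := ereal_inf _.
have T0 : (0 <= T)%E by apply/ereal_infP => _ [a Sa <-]; rewrite lee_fin ln_ge0 ?S1.
have Tfin : T \is a fin_num by rewrite ge0_fin_numE.
have d0 : 0 <= fine T by rewrite fine_ge0.
set d := fine T in d0 *.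
apply/ler_addgt0Pr => e e0.
have K1 : 0 < K + 1 by rewrite ltr_wpDl.
set del := e / (K + 1).
have del0 : 0 < del by rewrite divr_gt0.
have [_ [a Sa <-]] := lb_ereal_inf_adherent del0 Tfin.
rewrite -/T -[T]fineK // -EFinD lte_fin => lna_lt.
have a0 : 0 < a by rewrite (lt_le_trans ltr01) ?S1.
have expRN_le_inv : expR (- (d + del)) <= a^-1.
  by rewrite -[a]lnK ?posrE // -expRN ler_expR lerN2 ltW.
have expRN_del : expR (- d) * (1 - del) <= expR (- (d + del)).
  by rewrite opprD expRD ler_wpM2l ?expR_ge0 // expR_ge1Dx.
have expRN_le1 : expR (- d) <= 1 by rewrite -expR0 ler_expR oppr_le0.
have Kdel : K * del <= e.
  by rewrite /del mulrCA ger_pMr // ler_pdivrMr // mul1r lerDl.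
apply: le_trans (xK _ Sa) _.
have := expR_ge0 (- d); nra.
Qed.

Unset Implicit Arguments.

Theorem theorem3 (R : realType) (n : nat) (X Y : 'M[R[i]]_n) (p : \bar R) :
  X \is hermsymmx -> Y \is hermsymmx ->
  (thompson X Y < +oo)%E ->
  (1%:E <= p)%E ->
  let d := fine (thompson X Y) in
  schatten p (X - Y) <=
    two_pow_inv p * ((expR d - 1) / expR d) *
      Num.max (schatten p X) (schatten p Y).
Proof.
move=> hX hY dfin p1 /=; set d := fine (thompson X Y).
have -> : (expR d - 1) / expR d = 1 - expR (- d).
  by rewrite mulrBl divff ?gt_eqF ?expR_gt0 // mul1r expRN.
have c0 : 0 <= two_pow_inv p by case: p {p1} => [r||] //=; exact: powR_ge0.
have M0 : 0 <= Num.max (schatten p X) (schatten p Y).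
  by rewrite le_max schatten_hermitian // pnorm_ge0.
rewrite mulrAC; apply: le_onem_expRN_ereal_inf => [||//|a [a1 [XY YX]]].
- exact: mulr_ge0.
- by move=> a [].
- by rewrite mulrAC; apply: schatten_subr_le.
Qed.
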